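(* Let $T$ be a bounded linear operator on a complex Hilbert space. If $\mathcal{N}(T^* )\subseteq\mathcal{N}(T)$ and $T^n$ is hyponormal for some positive integer $n$, then $\mathcal{N}(T^m)=\mathcal{N}(T^{*m})$ for every positive integer $m$.
   Context: $\mathcal{N}(A)$ denotes the kernel of $A$. An operator $A$ is hyponormal if $AA^*\le A^*A$. *)

From HB Require Import structures.
From mathcomp Require Import all_boot all_order all_algebra.
From mathcomp Require Import complex.
From mathcomp Require Import boolp classical_sets reals.
Set Implicit Arguments. Unset Strict Implicit. Unset Printing Implicit Defensive.
Import Order.TTheory GRing.Theory Num.Theory.
Local Open Scope ring_scope.
Local Open Scope classical_set_scope.

Section Hilbert.
Variables (R : realType) (V : lmodType R[i]) (ip : V -> V -> R[i]).

Definition is_inner_product : Prop :=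
  [/\ forall (a : R[i]) (x y z : V), ip (a *: x + y) z = a * ip x z + ip y z,
      forall x y : V, ip y x = conjc (ip x y),
      forall x : V, 0 <= ip x x
    & forall x : V, ip x x = 0 -> x = 0].

Definition ipnorm (x : V) : R := Num.sqrt (@complex.Re R (ip x x)).

Definition ip_complete : Prop :=
  forall u : nat -> V,
    (forall e : R, 0 < e -> exists N, forall m n, (N <= m)%N -> (N <= n)%N ->
        ipnorm (u m - u n) < e) ->
    exists l : V, forall e : R, 0 < e -> exists N, forall n, (N <= n)%N ->
        ipnorm (u n - l) < e.

Definition bounded_linear (A : V -> V) : Prop :=
  [/\ forall (a : R[i]) (x y : V), A (a *: x + y) = a *: A x + A y
    & exists M : R, forall x, ipnorm (A x) <= M * ipnorm x].

Definition is_adjoint (A Astar : V -> V) : Prop :=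
  forall x y : V, ip (A x) y = ip x (Astar y).

Definition op_le (A B : V -> V) : Prop := forall x : V, ip (A x) x <= ip (B x) x.

Definition hyponormal (A : V -> V) : Prop :=
  forall Astar : V -> V, is_adjoint A Astar -> op_le (A \o Astar) (Astar \o A).

Definition kernel (A : V -> V) : set V := [set x | A x = 0].

Definition opow (A : V -> V) (n : nat) : V -> V := iter n A.

End Hilbert.

From HB Require Import structures.
From mathcomp Require Import all_boot all_order all_algebra.
From mathcomp Require Import complex.
From mathcomp Require Import boolp classical_sets reals.
Import Order.TTheory GRing.Theory Num.Theory.
Local Open Scope ring_scope.
Local Open Scope classical_set_scope.

(* Write S for the adjoint of T.  If N(B) <= N(A) for an adjoint pair (A, B),
   then N(B) meets the range of B only in 0, so N(B^k) = N(B) for all k > 0.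
   Hyponormality of T^n gives ||S^n x|| <= ||T^n x||, hence
   N(T) <= N(T^n) <= N(S^n) = N(S); with the hypothesis this yields
   N(T) = N(S), and both kernels are stable under taking powers. *)

Section Adjoint.
Context {R : realType} {V : lmodType R[i]} {ip : V -> V -> R[i]}.
Hypothesis Hip : is_inner_product ip.

Lemma ip0l (z : V) : ip 0 z = 0.
Proof.
case: Hip => lin _ _ _.
have := lin 1 0 0 z; rewrite scale1r addr0 mul1r.
by move/(congr1 (fun t => t - ip 0 z)); rewrite subrr addrK => <-.
Qed.

Lemma ip0r (z : V) : ip z 0 = 0.
Proof. by case: Hip => _ cs _ _; rewrite cs ip0l conjc0. Qed.

Lemma ip_ge0 (x : V) : 0 <= ip x x.
Proof. by case: Hip. Qed.

Lemma ip_eq0 (x : V) : ip x x = 0 -> x = 0.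
Proof. by case: Hip => _ _ _; apply. Qed.

Lemma adjoint_sym {A B : V -> V} : is_adjoint ip A B -> is_adjoint ip B A.
Proof. by case: Hip => _ cs _ _ adjAB u v; rewrite cs -adjAB -cs. Qed.

Lemma adjoint_fix0 {A B : V -> V} : is_adjoint ip A B -> B 0 = 0.
Proof. by move=> adjAB; apply: ip_eq0; rewrite -adjAB ip0r. Qed.

Lemma adjoint_opow {A B : V -> V} k :
  is_adjoint ip A B -> is_adjoint ip (opow A k) (opow B k).
Proof.
move=> adjAB; elim: k => [//|k IHk] x y.
by rewrite /opow /= adjAB IHk /opow -iterSr.
Qed.

Lemma adjoint_self_comp {A B : V -> V} (x : V) :
  is_adjoint ip A B -> ip ((A \o B) x) x = ip (B x) (B x).
Proof. by move=> adjAB; rewrite /= adjAB. Qed.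

Lemma sub_kernel_opow {B : V -> V} {k} :
  B 0 = 0 -> (0 < k)%N -> kernel B `<=` kernel (opow B k).
Proof.
move=> B0; case: k => [//|k] _ x Bx.
rewrite /kernel /opow /= -iterS iterSr Bx.
by elim: k => //= k ->.
Qed.

Section KernelPowers.
Context {A B : V -> V}.
Hypotheses (adjAB : is_adjoint ip A B) (kerBA : kernel B `<=` kernel A).

(* [B (B z) = 0] forces [A (B z) = 0], so [B z] is orthogonal to itself. *)
Lemma kernel_comp_self : kernel (B \o B) `<=` kernel B.
Proof.
move=> z /= BBz; apply: ip_eq0.
by rewrite -adjAB (kerBA _ BBz) ip0l.
Qed.

Lemma kernel_opow {k : nat} : (0 < k)%N -> kernel (opow B k) = kernel B.
Proof.
move=> k_gt0; apply/seteqP; split; last first.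
  exact: sub_kernel_opow (adjoint_fix0 adjAB) k_gt0.
case: k k_gt0 => [//|k] _; elim: k => [//|k IHk] x BBkx.
exact/IHk/(kernel_comp_self (opow B k x)).
Qed.

End KernelPowers.

Lemma hyponormal_kernel_sub {A B : V -> V} :
  is_adjoint ip A B -> hyponormal ip A -> kernel A `<=` kernel B.
Proof.
move=> adjAB hypA x Ax; apply: ip_eq0; apply/eqP.
have := hypA B adjAB x.
rewrite (adjoint_self_comp x adjAB) (adjoint_self_comp x (adjoint_sym adjAB)).
by rewrite Ax ip0l => le0; rewrite eq_le le0 ip_ge0.
Qed.

End Adjoint.

Theorem corollary5p7 (R : realType) (V : lmodType R[i]) (ip : V -> V -> R[i])
  (Hip : is_inner_product ip) (Hcomplete : ip_complete ip)
  (T Tstar : V -> V) (HT : bounded_linear ip T) (Hadj : is_adjoint ip T Tstar) :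
  kernel Tstar `<=` kernel T ->
  (exists n : nat, (0 < n)%N /\ hyponormal ip (opow T n)) ->
  forall m : nat, (0 < m)%N -> kernel (opow T m) = kernel (opow Tstar m).
Proof.
move=> kerTsT [n [n_gt0 hypTn]] m m_gt0.
have adjTsT := adjoint_sym Hip Hadj.
have kerTTs : kernel T `<=` kernel Tstar.
  apply: subset_trans (sub_kernel_opow (adjoint_fix0 Hip adjTsT) n_gt0) _.
  rewrite -(kernel_opow Hip Hadj kerTsT n_gt0).
  exact (hyponormal_kernel_sub Hip (adjoint_opow n Hadj) hypTn).
rewrite (kernel_opow Hip adjTsT kerTTs m_gt0) (kernel_opow Hip Hadj kerTsT m_gt0).
by apply/seteqP; split.
Qed.
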